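(* Let $f_{AN_2}(x)=\frac{x+1}{2}-\left(\frac{\sqrt x+1}{2}\right)\sqrt{\frac{x+1}{2}}$ for $x\in(0,\infty)$, let $f_{AN_2}^*(u)=u\,f_{AN_2}\!\left(\frac{1-u}{u}\right)$ for $u\in(0,1)$, extended by continuity to $[0,1]$ (explicitly $f_{AN_2}^*(u)=\frac12-\frac{\sqrt2}{4}\left(\sqrt u+\sqrt{1-u}\right)$), and define $\overline M_{AN_2}(C_1,C_2)=E_X\{f_{AN_2}^*(P(C_2\mid x))\}$. Then $$P_e\le \frac12\left[1-\frac{4}{2-\sqrt2}\,\overline M_{AN_2}(C_1,C_2)\right].$$
   Context: Two-class decision problem: classes $C_1,C_2$, an observation $x$ in a space $\mathrm X$ with density $p(x)$, and a posteriori probabilities $P(C_1\mid x),P(C_2\mid x)\ge0$ with $P(C_1\mid x)+P(C_2\mid x)=1$. $E_X\{g(x)\}=\int_{\mathrm X} g(x)p(x)\,dx$. $P_e=E_X\{\min(P(C_1\mid x),P(C_2\mid x))\}$ is the Bayesian probability of error. *)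

From HB Require Import structures.
From mathcomp Require Import all_boot all_order all_algebra.
From mathcomp Require Import all_classical all_reals all_analysis.
Set Implicit Arguments. Unset Strict Implicit. Unset Printing Implicit Defensive.
Import Order.TTheory GRing.Theory Num.Theory.
Local Open Scope ring_scope.

Definition fAN2 {R : realType} (x : R) : R :=
  (x + 1) / 2 - ((Num.sqrt x + 1) / 2) * Num.sqrt ((x + 1) / 2).

(* f*_{AN_2}(u) = u f_{AN_2}((1-u)/u) on (0,1), extended by continuity to
   [0,1]; the continuous extension at u = 0 and u = 1 equals
   1/2 - sqrt 2 / 4 (value of the explicit formula there). *)
Definition fAN2_star {R : realType} (u : R) : R :=
  if (0 < u) && (u < 1) then u * fAN2 ((1 - u) / u)
  else 1 / 2 - Num.sqrt 2 / 4.

From HB Require Import structures.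
From mathcomp Require Import all_boot all_order all_algebra.
From mathcomp Require Import all_classical all_reals all_analysis.
From mathcomp Require Import ring lra measurable_realfun.
Import Order.TTheory GRing.Theory Num.Theory.
Local Open Scope ring_scope.

(* For two posteriors p and 1 - p write a = sqrt (min p (1 - p)) and
   b = sqrt (max p (1 - p)), so that a^2 + b^2 = 1, a <= b, and
   fAN2_star p = 1/2 - sqrt 2 / 4 * (a + b).  After clearing the positive
   denominator 2 - sqrt 2, the pointwise bound
   min p (1 - p) <= 1/2 * (1 - 4 / (2 - sqrt 2) * fAN2_star p)
   becomes (2 - sqrt 2)(b^2 - a^2) + sqrt 2 (a + b) >= 2, which with
   u = b - a reduces to the one-variable polynomial inequality
   (2 - u^2)(sqrt 2 + (2 - sqrt 2) u)^2 >= 4 on [0, 1]; equality holds at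
   both endpoints u = 0 and u = 1.  Since the bound is affine in fAN2_star p,
   integrating it against the probability on X gives the theorem. *)

Section Sqrt2Inequalities.
Variable R : realType.

Lemma sqr_sqrt2 : Num.sqrt 2 ^+ 2 = 2 :> R.
Proof. by rewrite sqr_sqrtr. Qed.

Lemma sqrt2_bounds : 1 < Num.sqrt (2 : R) < 3 / 2.
Proof.
have s2 := sqr_sqrt2; have s0 : 0 < Num.sqrt 2 :> R by rewrite sqrtr_gt0.
by apply/andP; split; nra.
Qed.

Lemma four_le_sqrt2_quartic (u : R) : 0 <= u <= 1 ->
  4 <= (2 - u ^+ 2) * (Num.sqrt 2 + (2 - Num.sqrt 2) * u) ^+ 2.
Proof.
move=> /andP[u0 u1]; have s2 := sqr_sqrt2; have /andP[s1 s32] := sqrt2_bounds.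
set s := Num.sqrt 2 in s2 s1 s32 *.
have -> : (2 - u ^+ 2) * (s + (2 - s) * u) ^+ 2
    = 4 + u * (1 - u) * ((6 - 4 * s) * u ^+ 2 + 2 * u + 8 * s - 8)
      + (2 - u ^+ 2) * (s ^+ 2 - 2) * (1 - u) ^+ 2 by ring.
rewrite s2 subrr mulr0 mul0r addr0 lerDl.
by apply: mulr_ge0; nra.
Qed.

Lemma two_le_sqrt2_circle (a b : R) : 0 <= a <= b -> a ^+ 2 + b ^+ 2 = 1 ->
  2 <= (2 - Num.sqrt 2) * (b ^+ 2 - a ^+ 2) + Num.sqrt 2 * (a + b).
Proof.
move=> /andP[a0 ab] e; have /andP[s1 s32] := sqrt2_bounds.
(* with t = a + b and u = b - a the circle becomes t^2 = 2 - u^2 *)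
have -> : (2 - Num.sqrt 2) * (b ^+ 2 - a ^+ 2) + Num.sqrt 2 * (a + b) =
  (a + b) * (Num.sqrt 2 + (2 - Num.sqrt 2) * (b - a)) by ring.
have H : 4 <= ((a + b) * (Num.sqrt 2 + (2 - Num.sqrt 2) * (b - a))) ^+ 2.
  rewrite exprMn (_ : (a + b) ^+ 2 = 2 - (b - a) ^+ 2); last by rewrite -e; ring.
  by apply: four_le_sqrt2_quartic; apply/andP; split; nra.
have : 0 <= (a + b) * (Num.sqrt 2 + (2 - Num.sqrt 2) * (b - a)).
  by apply: mulr_ge0; nra.
nra.
Qed.

End Sqrt2Inequalities.

Section FAN2Star.
Variable R : realType.
Implicit Types u p : R.

Lemma fAN2_starE u : 0 <= u <= 1 ->
  fAN2_star u = 1 / 2 - Num.sqrt 2 / 4 * (Num.sqrt u + Num.sqrt (1 - u)).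
Proof.
move=> /andP[u0 u1]; rewrite /fAN2_star.
case: ifP => [/andP[ul ur]|/negbT].
  rewrite /fAN2.
  have -> : ((1 - u) / u + 1) / 2 = u^-1 * 2^-1 by field; lra.
  rewrite sqrtrM ?subr_ge0 // [Num.sqrt (u^-1 / 2)]sqrtrM ?invr_ge0 ?(ltW ul) //.
  rewrite !sqrtrV ?(ltW ul) //.
  have su : 0 < Num.sqrt u by rewrite sqrtr_gt0.
  have Eu : Num.sqrt u ^+ 2 = u by rewrite sqr_sqrtr.
  have s2 := sqr_sqrt2 R; have /andP[s1 _] := sqrt2_bounds R.
  have Vs : (Num.sqrt 2)^-1 = Num.sqrt 2 / 2 :> R.
    have s_neq0 : Num.sqrt 2 != 0 :> R by rewrite gt_eqF // (lt_trans ltr01).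
    by apply: (mulIf s_neq0); rewrite mulVf // mulrAC -expr2 s2 divff.
  rewrite Vs; set a := Num.sqrt u in su Eu *; set b := Num.sqrt (1 - u).
  set s := Num.sqrt 2; rewrite -Eu; clearbody a b s; field; lra.
rewrite negb_and -!leNgt => /orP[h|h].
  by rewrite (_ : u = 0) ?subr0 ?sqrtr0 ?sqrtr1 ?add0r ?mulr1 //; lra.
by rewrite (_ : u = 1) ?subrr ?sqrtr0 ?sqrtr1 ?addr0 ?mulr1 //; lra.
Qed.

Lemma fAN2_star_sym u : 0 <= u <= 1 -> fAN2_star (1 - u) = fAN2_star u.
Proof.
move=> u01; have /andP[u0 u1] := u01.
rewrite !fAN2_starE ?subKr // 1?[Num.sqrt u + _]addrC //.
by apply/andP; split; lra.
Qed.

Lemma fAN2_star_bounds u : 0 <= u <= 1 -> 0 <= fAN2_star u <= 1 / 2.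
Proof.
move=> u01; have /andP[u0 u1] := u01; rewrite fAN2_starE //.
have s2 := sqr_sqrt2 R; have /andP[s1 _] := sqrt2_bounds R.
have a0 := sqrtr_ge0 u; have b0 := sqrtr_ge0 (1 - u).
have Ea : Num.sqrt u ^+ 2 = u by rewrite sqr_sqrtr.
have Eb : Num.sqrt (1 - u) ^+ 2 = 1 - u by rewrite sqr_sqrtr // subr_ge0.
set a := Num.sqrt u in a0 Ea *; set b := Num.sqrt (1 - u) in b0 Eb *.
set s := Num.sqrt 2 in s2 s1 *.
have ab_le_s : a + b <= s.
  have : (a + b) ^+ 2 <= s ^+ 2.
    (* (a + b)^2 <= 2 (a^2 + b^2) = 2 *)
    by rewrite s2; have := sqr_ge0 (a - b); nra.
  nra.
by apply/andP; split; nra.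
Qed.

Lemma le_fAN2_star_bound p : 0 <= p <= 1 - p ->
  p <= 1 / 2 * (1 - 4 / (2 - Num.sqrt 2) * fAN2_star p).
Proof.
move=> /andP[p0 le_p]; rewrite fAN2_starE; last by apply/andP; split; lra.
have /andP[_ s32] := sqrt2_bounds R.
have Ea : Num.sqrt p ^+ 2 = p by rewrite sqr_sqrtr.
have Eb : Num.sqrt (1 - p) ^+ 2 = 1 - p by rewrite sqr_sqrtr //; lra.
have ab : 0 <= Num.sqrt p <= Num.sqrt (1 - p) by rewrite sqrtr_ge0 ler_sqrt //; lra.
have := @two_le_sqrt2_circle R _ _ ab; rewrite Ea Eb => /(_ (subrKC _ _)).
set a := Num.sqrt p; set b := Num.sqrt (1 - p); set s := Num.sqrt 2 in s32 * => H.
rewrite -subr_ge0.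
have -> : 1 / 2 * (1 - 4 / (2 - s) * (1 / 2 - s / 4 * (a + b))) - p =
   ((2 - s) * (1 - p - p) - 2 + s * (a + b)) / (2 * (2 - s)).
  by field; lra.
by apply: divr_ge0; lra.
Qed.

Lemma min_le_fAN2_star p : 0 <= p <= 1 ->
  Order.min (1 - p) p <= 1 / 2 * (1 - 4 / (2 - Num.sqrt 2) * fAN2_star p).
Proof.
move=> p01; have /andP[p0 p1] := p01.
have [le_p|/ltW le_q] := leP p (1 - p).
  by apply: le_fAN2_star_bound; rewrite p0.
rewrite -fAN2_star_sym //; apply: le_fAN2_star_bound.
by rewrite subKr subr_ge0 p1.
Qed.

End FAN2Star.

Section Integrals.
Local Open Scope ereal_scope.
Context d (X : measurableType d) (R : realType).

Lemma measurable_fAN2_star_comp (f : X -> R) :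
  measurable_fun setT f -> (forall x, 0 <= f x <= 1)%R ->
  measurable_fun setT (fun x => fAN2_star (f x)).
Proof.
move=> mf f01.
apply: (eq_measurable_fun (fun x => 1 / 2 - Num.sqrt 2 / 4 *
    (Num.sqrt (f x) + Num.sqrt (1 - f x))))%R.
  by move=> x _; rewrite fAN2_starE.
have msqrt : measurable_fun setT (@Num.sqrt R).
  by apply: continuous_measurable_fun; exact: sqrt_continuous.
apply: measurable_funB => //; apply: measurable_funM => //.
apply: measurable_funD; first exact: measurableT_comp msqrt mf.
by apply: measurableT_comp msqrt _; apply: measurable_funB.
Qed.

Lemma bounded_integrable (mu : {finite_measure set X -> \bar R}) (f : X -> R) (M : R) :
  measurable_fun setT f -> (forall x, `|f x| <= M)%R ->
  mu.-integrable setT (EFin \o f).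
Proof.
move=> mf bf; apply: measurable_bounded_integrable => //.
  by have /fin_numPlt/andP[] := fin_num_measure mu setT measurableT.
exists M; split; first by rewrite num_real.
by move=> N MN x _; apply: le_trans (bf x) _; exact: ltW.
Qed.

Lemma integrable_affine (mu : {finite_measure set X -> \bar R}) (f : X -> R) (a c : R) :
  mu.-integrable setT (EFin \o f) ->
  mu.-integrable setT (fun x => (a * (1 - c * f x))%:E).
Proof.
move=> intf; apply: (eq_integrable _ (fun x => a%:E - (a * c)%:E * (f x)%:E)) => //.
  by move=> x _; rewrite -EFinM -EFinB mulrBr mulr1 mulrA.
apply: integrableB => //; first exact: finite_measure_integrable_cst.
exact: integrableZl.
Qed.

Lemma integral_affine (P : probability X R) (f : X -> R) (a c : R) :
  P.-integrable setT (EFin \o f) ->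
  \int[P]_x (a * (1 - c * f x))%:E = a%:E * (1 - c%:E * \int[P]_x (f x)%:E).
Proof.
move=> intf.
have intcf := integrableZl measurableT (a * c) intf.
transitivity (\int[P]_x (a%:E - ((a * c) * f x)%:E)).
  by apply: eq_integral => x _; rewrite -EFinB mulrBr mulr1 mulrA.
rewrite integralB_EFin //; last exact: finite_measure_integrable_cst.
have -> : \int[P]_x a%:E = a%:E.
  by rewrite integral_cst // -[RHS]mule1; congr (_ * _); exact: probability_setT.
under eq_integral do rewrite EFinM.
rewrite integralZl //.
have /fineK <- := integrable_fin_num measurableT intf.
by rewrite -EFinM -EFinB -EFinM mulrBr mulr1 mulrA.
Qed.

End Integrals.

Local Open Scope ereal_scope.

Theorem mainTheorem7 (d : measure_display) (X : measurableType d)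
  (R : realType) (PX : probability X R) (P1 P2 : X -> R)
  (mP1 : measurable_fun setT P1) (mP2 : measurable_fun setT P2)
  (P1ge0 : forall x, (0 <= P1 x)%R) (P2ge0 : forall x, (0 <= P2 x)%R)
  (P12 : forall x, (P1 x + P2 x)%R = 1%R) :
  let Pe := \int[PX]_x (Order.min (P1 x) (P2 x))%:E in
  let MAN2 := \int[PX]_x (fAN2_star (P2 x))%:E in
  Pe <= (1 / 2)%:E * (1%:E - (4 / (2 - Num.sqrt 2))%:E * MAN2).
Proof.
cbv zeta.
have P1E x : P1 x = (1 - P2 x)%R by rewrite -(P12 x) addrK.
have P2_01 x : (0 <= P2 x <= 1)%R by rewrite P2ge0 -subr_ge0 -P1E P1ge0.
have intf : PX.-integrable setT (EFin \o fun x => fAN2_star (P2 x)).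
  apply: (@bounded_integrable _ _ _ PX _ 1).
    exact: measurable_fAN2_star_comp.
  move=> x.
  have /andP[f0 f1] := @fAN2_star_bounds R _ (P2_01 x).
  by rewrite ger0_norm //; lra.
have intmin : PX.-integrable setT (EFin \o fun x => Order.min (P1 x) (P2 x)).
  apply: (@bounded_integrable _ _ _ PX _ 1); first exact: measurable_minr.
  move=> x; have /andP[p0 p1] := P2_01 x.
  by rewrite ger0_norm ?le_min ?P1ge0 ?p0 // ge_min p1 orbT.
rewrite -integral_affine //.
apply: le_integral => // [|x _]; first exact: integrable_affine.
by rewrite lee_fin P1E; apply: min_le_fAN2_star.
Qed.
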